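(* Let $\mathscr{C}$ be an extensive category and $T$ a singletonizable Grothendieck topology on $\mathscr{C}$. Then $\mathrm{Sing}(T)\sim T$.
   Context: A Grothendieck topology $T$ on $\mathscr{C}$ assigns to each object $X$ a set of families $(\pi_i:U_i\to X)_{i\in I}$ (''coverings'') such that isomorphisms form singleton coverings, coverings of members of a covering compose to coverings, and coverings pull back (pullbacks existing) along arbitrary morphisms to coverings. A morphism is universal if its pullback along every morphism exists; $\pi:Y\to X$ is $T$-locally split if there is a covering $(\pi_i:U_i\to X)$ and $\rho_i:U_i\to Y$ with $\pi\circ\rho_i=\pi_i$. $T_1\prec T_2$ means every universal $T_1$-locally split morphism is $T_2$-locally split; $T_1\sim T_2$ means $T_1\prec T_2$ and $T_2\prec T_1$. A category is extensive if it has an initial object, existing binary coproducts are disjoint, and existing coproducts are stable under pullback (for any existing $\coprod_iU_i$ and $f:X\to\coprod_iU_i$, the pullbacks of the injections exist and $X$ is their coproduct). $T$ is singletonizable if for every covering $(\phi_i:U_i\to X)_{i\in I}$ the coproduct $\coprod_iU_i$ exists. $\mathrm{Sing}(T)$ is the Grothendieck topology (on extensive $\mathscr{C}$) whose coverings are the singleton families $(\phi:\coprod_iU_i\to X)$ with $\phi|_{U_i}=\phi_i$, for all $T$-coverings $(\phi_i:U_i\to X)_{i\in I}$. *)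

Set Implicit Arguments.
Unset Strict Implicit.

Record Category := {
  Obj :> Type;
  Hom : Obj -> Obj -> Type;
  cid : forall X, Hom X X;
  comp : forall X Y Z, Hom Y Z -> Hom X Y -> Hom X Z;
  comp_assoc : forall W X Y Z (h : Hom Y Z) (g : Hom X Y) (f : Hom W X),
      comp h (comp g f) = comp (comp h g) f;
  comp_id_l : forall X Y (f : Hom X Y), comp (cid Y) f = f;
  comp_id_r : forall X Y (f : Hom X Y), comp f (cid X) = f
}.

Arguments Hom {c} X Y.
Arguments cid {c} X.
Arguments comp {c X Y Z} g f.

Section Cat.
Variable C : Category.

Definition is_iso (X Y : C) (f : Hom X Y) : Prop :=
  exists g : Hom Y X, comp g f = cid X /\ comp f g = cid Y.

Definition is_initial (O : C) : Prop :=
  forall Q : C, exists! u : Hom O Q, True.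

Definition is_pullback (X Y Z P : C) (f : Hom X Z) (g : Hom Y Z)
    (p1 : Hom P X) (p2 : Hom P Y) : Prop :=
  comp f p1 = comp g p2 /\
  forall (Q : C) (q1 : Hom Q X) (q2 : Hom Q Y), comp f q1 = comp g q2 ->
    exists! u : Hom Q P, comp p1 u = q1 /\ comp p2 u = q2.

Definition pullback_exists (X Y Z : C) (f : Hom X Z) (g : Hom Y Z) : Prop :=
  exists (P : C) (p1 : Hom P X) (p2 : Hom P Y), is_pullback f g p1 p2.

Definition is_coproduct {I : Type} (U : I -> C) (Co : C)
    (inj : forall i, Hom (U i) Co) : Prop :=
  forall (Q : C) (q : forall i, Hom (U i) Q),
    exists! u : Hom Co Q, forall i, comp u (inj i) = q i.
Arguments is_coproduct {I} U Co inj.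

Definition is_bin_coproduct (A B Co : C) (iA : Hom A Co) (iB : Hom B Co) : Prop :=
  forall (Q : C) (qA : Hom A Q) (qB : Hom B Q),
    exists! u : Hom Co Q, comp u iA = qA /\ comp u iB = qB.

Definition extensive : Prop :=
  (exists O : C, is_initial O) /\
  (* existing binary coproducts are disjoint *)
  (forall (A B Co : C) (iA : Hom A Co) (iB : Hom B Co),
     is_bin_coproduct iA iB ->
     exists (P : C) (p1 : Hom P A) (p2 : Hom P B),
       is_pullback iA iB p1 p2 /\ is_initial P) /\
  (* existing coproducts are stable under pullback *)
  (forall (I : Type) (U : I -> C) (Co : C) (inj : forall i, Hom (U i) Co),
     is_coproduct U Co inj ->
     forall (X : C) (f : Hom X Co),
       (forall i, pullback_exists (inj i) f) /\
       (forall (P : I -> C) (p : forall i, Hom (P i) X)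
               (q : forall i, Hom (P i) (U i)),
          (forall i, is_pullback (inj i) f (q i) (p i)) ->
          is_coproduct P X p)).

Record Family (X : C) := {
  fI : Type;
  fU : fI -> C;
  fpi : forall i, Hom (fU i) X
}.
Arguments fI {X} f.
Arguments fU {X} f i.
Arguments fpi {X} f i.

Definition singleton_family (X Y : C) (f : Hom Y X) : Family X :=
  {| fI := unit; fU := fun _ => Y; fpi := fun _ => f |}.

Definition Coverage := forall X : C, Family X -> Prop.

Definition composite_family (X : C) (F : Family X)
    (G : forall i : fI F, Family (fU F i)) : Family X :=
  {| fI := { i : fI F & fI (G i) };
     fU := fun k => fU (G (projT1 k)) (projT2 k);
     fpi := fun k => comp (fpi F (projT1 k)) (fpi (G (projT1 k)) (projT2 k)) |}.

Definition is_topology (T : Coverage) : Prop :=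
  (forall (X Y : C) (f : Hom Y X), is_iso f -> T X (singleton_family f)) /\
  (forall (X : C) (F : Family X), T X F ->
     forall G : forall i : fI F, Family (fU F i),
       (forall i, T (fU F i) (G i)) -> T X (composite_family G)) /\
  (forall (X : C) (F : Family X), T X F ->
     forall (Y : C) (f : Hom Y X),
       (forall i, pullback_exists (fpi F i) f) /\
       (forall (P : fI F -> C) (p : forall i, Hom (P i) Y)
               (q : forall i, Hom (P i) (fU F i)),
          (forall i, is_pullback (fpi F i) f (q i) (p i)) ->
          T Y {| fI := fI F; fU := P; fpi := p |})).

Definition universal (X Y : C) (pi : Hom Y X) : Prop :=
  forall (Z : C) (g : Hom Z X), pullback_exists pi g.

Definition locally_split (T : Coverage) (X Y : C) (pi : Hom Y X) : Prop :=
  exists F : Family X, T X F /\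
    exists rho : forall i, Hom (fU F i) Y, forall i, comp pi (rho i) = fpi F i.

Definition coverage_prec (T1 T2 : Coverage) : Prop :=
  forall (X Y : C) (pi : Hom Y X),
    universal pi -> locally_split T1 pi -> locally_split T2 pi.

Definition coverage_equiv (T1 T2 : Coverage) : Prop :=
  coverage_prec T1 T2 /\ coverage_prec T2 T1.

Definition singletonizable (T : Coverage) : Prop :=
  forall (X : C) (F : Family X), T X F ->
    exists (Co : C) (inj : forall i, Hom (fU F i) Co), is_coproduct (fU F) Co inj.

Definition Sing (T : Coverage) : Coverage :=
  fun X G => exists F : Family X, T X F /\
    exists (Co : C) (inj : forall i, Hom (fU F i) Co) (phi : Hom Co X),
      is_coproduct (fU F) Co inj /\
      (forall i, comp phi (inj i) = fpi F i) /\
      G = singleton_family phi.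

End Cat.


(* A T-covering (U_i -> X) and the single map from the coproduct of the U_i
   split exactly the same morphisms: a splitting over the coproduct restricts
   along the injections, and a family of splittings copairs to one. *)

Section SingLocallySplit.
Variable C : Category.

Lemma coproduct_hom_ext {I : Type} {U : I -> C} {Co Q : C}
    {inj : forall i, Hom (U i) Co} {f g : Hom Co Q} :
  is_coproduct inj ->
  (forall i, comp f (inj i) = comp g (inj i)) -> f = g.
Proof.
  intros Hco Hfg.
  destruct (Hco Q (fun i => comp g (inj i))) as [u [_ Hu]].
  rewrite <- (Hu f Hfg). apply Hu. reflexivity.
Qed.

Variable T : Coverage C.

Lemma locally_split_of_Sing (X Y : C) (pi : Hom Y X) :
  locally_split (Sing T) pi -> locally_split T pi.
Proof.
  intros [G [[F [HF [Co [inj [phi [_ [Hphi ->]]]]]]] [rho Hrho]]].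
  exists F. split; [exact HF|].
  exists (fun i => comp (rho tt) (inj i)). intro i.
  rewrite comp_assoc, (Hrho tt). apply Hphi.
Qed.

Lemma locally_split_Sing (X Y : C) (pi : Hom Y X) :
  singletonizable T -> locally_split T pi -> locally_split (Sing T) pi.
Proof.
  intros HS [F [HF [rho Hrho]]].
  destruct (HS X F HF) as [Co [inj Hco]].
  destruct (Hco X (fun i => fpi (f:=F) i)) as [phi [Hphi _]].
  destruct (Hco Y rho) as [r [Hr _]].
  exists (singleton_family phi). split.
  - exists F. split; [exact HF|]. exists Co, inj, phi. auto.
  - exists (fun _ => r). intros []. simpl.
    apply (coproduct_hom_ext Hco). intro i.
    rewrite <- comp_assoc, Hr, Hrho. symmetry. apply Hphi.
Qed.

End SingLocallySplit.

Theorem mainTheorem7 (C : Category) (T : Coverage C) :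
  extensive C -> is_topology T -> singletonizable T ->
  coverage_equiv (Sing T) T.
Proof.
  intros _ _ HS. split; intros X Y pi _.
  - apply locally_split_of_Sing.
  - now apply locally_split_Sing.
Qed.
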